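(* Let $K\subseteq L$ be differential fields and $r\in\mathbb{N}$. Then $K$ is $r$-differentially closed in $L$ if and only if there is no differential subfield $E$ of $L$ with $K\subsetneq E$ and $\operatorname{trdeg}(E|K)\le r$.
   Context: Differential fields have characteristic $0$. $K$ is $r$-differentially closed in $L$ if for every nonzero differential polynomial $P\in K\{Y\}$ of order $\le r$, every zero of $P$ in $L$ lies in $K$. $\operatorname{trdeg}$ denotes transcendence degree of field extensions. *)

From HB Require Import structures.
From mathcomp Require Import all_boot all_order all_algebra.
From mathcomp Require Import mpoly.
Set Implicit Arguments. Unset Strict Implicit. Unset Printing Implicit Defensive.
Import GRing.Theory.
Local Open Scope ring_scope.

Section Diff.
Variable L : fieldType.

Definition derivation (d : L -> L) : Prop :=
  (forall x y, d (x + y) = d x + d y) /\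
  (forall x y, d (x * y) = d x * y + x * d y).

Definition diff_subfield (d : L -> L) (S : pred L) : Prop :=
  [/\ 1 \in S,
      (forall x y, x \in S -> y \in S -> x - y \in S),
      (forall x y, x \in S -> y \in S -> x * y \in S),
      (forall x, x \in S -> x^-1 \in S) &
      (forall x, x \in S -> d x \in S)].

Definition coeffs_in (K : pred L) n (p : {mpoly L[n]}) : Prop :=
  forall m, p@_m \in K.

Definition alg_indep (K : pred L) (s : seq L) : Prop :=
  forall p : {mpoly L[size s]}, coeffs_in K p ->
    p.@[fun i : 'I_(size s) => s`_i] = 0 -> p = 0.

Definition trdeg_le (K E : pred L) (r : nat) : Prop :=
  forall s : seq L, all (mem E) s -> alg_indep K s -> (size s <= r)%N.

(* K is r-differentially closed in L: for every nonzero differential polynomial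
   P in K{Y} of order <= r (i.e. a nonzero polynomial over K in the r+1
   variables Y, Y', ..., Y^(r)), every zero a of P in L lies in K. *)
Definition r_diff_closed (d : L -> L) (K : pred L) (r : nat) : Prop :=
  forall p : {mpoly L[r.+1]}, coeffs_in K p -> p != 0 ->
    forall a : L, p.@[fun i : 'I_r.+1 => iter i d a] = 0 -> a \in K.

End Diff.

From HB Require Import structures.
From mathcomp Require Import all_boot all_order all_algebra.
From mathcomp Require Import mpoly.
From Stdlib Require Import Classical ClassicalEpsilon.
From mathcomp Require Import ring zify.
Set Implicit Arguments. Unset Strict Implicit. Unset Printing Implicit Defensive.
Import GRing.Theory.
Local Open Scope ring_scope.

(* If [E] is a proper differential extension of [K] inside [L] with
   trdeg(E|K) <= r, then for [x] in [E] but not in [K] the r + 1 elements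
   x, x', ..., x^(r) of [E] are algebraically dependent over [K], so [x] is the
   zero of a nonzero differential polynomial of order <= r.
   Conversely, let [a] not in [K] be such a zero and take a relation [q] among
   a, ..., a^(n) with [n] least, and then [q] of least size.  In characteristic
   0, differentiating q(a, ..., a^(n)) = 0 puts a^(n+1) in K(a, ..., a^(n)),
   which is therefore a differential subfield; it has transcendence degree
   <= n <= r because any n + 1 of its elements, written over a common
   denominator and homogenized, satisfy a relation found by counting
   dimensions of spaces of forms modulo the homogenized [q]. *)

Definition map_mcoeff (R : nzRingType) n (f : R -> R) (p : {mpoly R[n]}) : {mpoly R[n]} :=
  \sum_(m <- msupp p) f p@_m *: 'X_[m].

Lemma mcoeff_map_mcoeff (R : nzRingType) n (f : R -> R) (p : {mpoly R[n]}) m :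
  f 0 = 0 -> (map_mcoeff f p)@_m = f p@_m.
Proof.
move=> f0; rewrite /map_mcoeff raddf_sum /=.
have [pm|pm] := boolP (m \in msupp p).
  rewrite (bigD1_seq m) //= ?msupp_uniq // mcoeffZ mcoeffX eqxx mulr1 big1 ?addr0 //.
  by move=> m' m'm; rewrite mcoeffZ mcoeffX (negbTE m'm) mulr0.
rewrite big_seq big1; last first.
  move=> m' m'p; rewrite mcoeffZ mcoeffX; case: eqP => [e|]; last by rewrite mulr0.
  by move: pm; rewrite -e m'p.
by move: pm; rewrite mcoeff_msupp negbK => /eqP ->.
Qed.

Section Derivation.
Variables (L : fieldType) (d : L -> L).
Hypothesis hd : derivation d.

Lemma derivationD x y : d (x + y) = d x + d y. Proof. by case: hd. Qed.
Lemma derivationM x y : d (x * y) = d x * y + x * d y. Proof. by case: hd. Qed.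

Lemma derivation0 : d 0 = 0.
Proof. by have := derivationD 0 0; rewrite addr0 -{1}[d 0]addr0 => /addrI. Qed.

Lemma derivation1 : d 1 = 0.
Proof.
by have := derivationM 1 1; rewrite !mul1r mulr1 -{1}[d 1]addr0 => /addrI.
Qed.

Lemma derivation_sum (I : Type) (r : seq I) (P : pred I) (F : I -> L) :
  d (\sum_(i <- r | P i) F i) = \sum_(i <- r | P i) d (F i).
Proof.
elim: r => [|x r IH]; first by rewrite !big_nil derivation0.
by rewrite !big_cons; case: (P x); rewrite ?derivationD IH.
Qed.

Lemma derivationX x k : d (x ^+ k) = k%:R * x ^+ k.-1 * d x.
Proof.
elim: k => [|k IH]; first by rewrite expr0 derivation1 !mul0r.
rewrite exprS derivationM IH; case: k IH => [|k] IH /=.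
  by rewrite expr0 mulr1 !mul0r mulr0 addr0 !mul1r.
rewrite !exprS -[(k.+2)%:R]natr1 -[(k.+1)%:R]natr1; ring.
Qed.

Lemma derivationV x : x != 0 -> d x^-1 = - d x / x ^+ 2.
Proof.
move=> x0; have := derivationM x x^-1; rewrite mulfV // derivation1.
move=> /esym /eqP; rewrite addr_eq0 => /eqP dxV.
apply: (mulfI x0); rewrite -[x * _]opprK -dxV; field; exact: x0.
Qed.

Lemma derivation_prod n (F : 'I_n -> L) :
  d (\prod_(i < n) F i) = \sum_(i < n) d (F i) * \prod_(j < n | j != i) F j.
Proof.
elim: n F => [|n IH] F; first by rewrite big_ord0 derivation1 big_ord0.
have lt_max (j : 'I_n) : widen_ord (leqnSn n) j != ord_max.
  by rewrite -val_eqE /= neq_ltn ltn_ord.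
rewrite big_ord_recr derivationM IH big_ord_recr /= mulr_suml; congr (_ + _).
  apply: eq_bigr => i _; rewrite -mulrA; congr (_ * _).
  rewrite [RHS](bigD1 ord_max) 1?eq_sym //= mulrC; congr (_ * _).
  rewrite [RHS]big_mkcond big_ord_recr /= eqxx andbF mulr1 [LHS]big_mkcond.
  by apply: eq_bigr => j _; rewrite lt_max andbT -!val_eqE.
rewrite mulrC; congr (_ * _).
rewrite [RHS]big_mkcond big_ord_recr /= eqxx mulr1.
by apply: eq_bigr => j _; rewrite lt_max.
Qed.

Lemma derivation_mevalX n (m : 'X_{1..n}) (x : 'I_n -> L) :
  d ('X_[m]).@[x] = \sum_(i < n) ((m i)%:R * ('X_[m - U_(i)]).@[x]) * d (x i).
Proof.
rewrite mevalX derivation_prod; apply: eq_bigr => i _.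
rewrite derivationX mevalX [in RHS](bigD1 i) //= mnmBE mnm1E eqxx subn1.
rewrite [in RHS](eq_bigr (fun j => x j ^+ m j)); first by ring.
by move=> j ji; rewrite mnmBE mnm1E eq_sym (negbTE ji) subn0.
Qed.

Lemma derivation_meval n (p : {mpoly L[n]}) (x : 'I_n -> L) :
  d p.@[x] = (map_mcoeff d p).@[x] + \sum_(i < n) (p^`M(i)).@[x] * d (x i).
Proof.
rewrite {1}(mpolyE p) raddf_sum /= derivation_sum /map_mcoeff raddf_sum /=.
have -> : \sum_(i < n) (p^`M(i)).@[x] * d (x i) =
    \sum_(m <- msupp p) \sum_(i < n)
      p@_m * (((m i)%:R * ('X_[m - U_(i)]).@[x]) * d (x i)).
  rewrite exchange_big /=; apply: eq_bigr => i _; rewrite {1}(mpolyE p).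
  rewrite (big_morph _ (@mderivD _ _ i) (@mderiv0 _ _ i)) raddf_sum /= mulr_suml.
  by apply: eq_bigr => m _; rewrite mderivZ mevalZ mderivX mevalZ -!mulrA.
rewrite -big_split /=; apply: eq_bigr => m _.
by rewrite !mevalZ derivationM (derivation_mevalX m x) -mulr_sumr.
Qed.

End Derivation.

Section Remap.
Variables (R : comNzRingType) (n n' : nat) (phi : 'X_{1..n} -> 'X_{1..n'}).
Implicit Types (p : {mpoly R[n]}).

Definition remap p : {mpoly R[n']} := \sum_(m <- msupp p) p@_m *: 'X_[phi m].

Lemma mcoeff_remap p m' : (remap p)@_m' = \sum_(m <- msupp p | phi m == m') p@_m.
Proof.
rewrite /remap raddf_sum /= [RHS]big_mkcond /=; apply: eq_bigr => m _.
by rewrite mcoeffZ mcoeffX; case: eqP; rewrite ?mulr1 ?mulr0.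
Qed.

Lemma mcoeff_remap_inj p m : {in msupp p &, injective phi} -> m \in msupp p ->
  (remap p)@_(phi m) = p@_m.
Proof.
move=> inj pm; rewrite mcoeff_remap big_seq_cond big_mkcond.
rewrite (bigD1_seq m) ?msupp_uniq //= pm eqxx big1 ?addr0 // => m' m'm.
case: ifP => // /andP [pm' /eqP e].
by move: m'm; rewrite (inj _ _ pm' pm e) eqxx.
Qed.

Lemma msupp_remap p m' : m' \in msupp (remap p) -> exists2 m, m \in msupp p & m' = phi m.
Proof.
rewrite mcoeff_msupp mcoeff_remap => nz.
have [/hasP [m pm /eqP <-]|/hasPn none] := boolP (has (fun m => phi m == m') (msupp p)).
  by exists m.
rewrite big_seq_cond big1 ?eqxx // in nz.
by move=> m /andP [pm e]; move: (none m pm); rewrite e.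
Qed.

Lemma remap_eq0 p : {in msupp p &, injective phi} -> (remap p == 0) = (p == 0).
Proof.
move=> inj; apply/idP/idP => [|/eqP ->]; last by rewrite /remap msupp0 big_nil.
apply: contraLR; rewrite -msupp_eq0; case e: (msupp p) => [|m s] // _.
have pm : m \in msupp p by rewrite e mem_head.
apply/eqP => p0; have := mcoeff_remap_inj inj pm; rewrite p0 mcoeff0 => e0.
by move: pm; rewrite mcoeff_msupp -e0 eqxx.
Qed.

Lemma meval_remap p (x : 'I_n -> R) (y : 'I_n' -> R) :
  (forall m, m \in msupp p -> ('X_[phi m]).@[y] = ('X_[m]).@[x]) ->
  (remap p).@[y] = p.@[x].
Proof.
move=> eqX; rewrite {2}(mpolyE p) /remap !raddf_sum /=.
by apply: eq_big_seq => m pm; rewrite !mevalZ eqX.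
Qed.

Lemma remap_over (S : addrClosed R) p :
  p \is a mpolyOver n S -> remap p \is a mpolyOver n' S.
Proof.
move=> /mpolyOverP pS; apply/mpolyOverP => m; rewrite mcoeff_remap.
by elim/big_ind: _ => //; [exact: rpred0 | exact: rpredD].
Qed.

Lemma remap_homog p D : (forall m, m \in msupp p -> mdeg (phi m) = D) ->
  remap p \is D.-homog.
Proof. by move=> degD; apply/dhomogP => m' /msupp_remap [m pm ->]; exact: degD. Qed.

End Remap.

Section MonomialMaps.
Variable n : nat.

Definition mnm_cons (t : nat) (m : 'X_{1..n}) : 'X_{1..n.+1} :=
  [multinom (if unlift ord0 i is Some j then m j else t) | i < n.+1].
Definition mnm_behead (m : 'X_{1..n.+1}) : 'X_{1..n} :=
  [multinom m (lift ord0 i) | i < n].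
Definition mnm_belast (m : 'X_{1..n.+1}) : 'X_{1..n} :=
  [multinom m (widen_ord (leqnSn n) i) | i < n].

Lemma mnm_cons0 t m : mnm_cons t m ord0 = t.
Proof. by rewrite mnmE unlift_none. Qed.
Lemma mnm_consS t m j : mnm_cons t m (lift ord0 j) = m j.
Proof. by rewrite mnmE liftK. Qed.
Lemma mnm_beheadE (m : 'X_{1..n.+1}) j : mnm_behead m j = m (lift ord0 j).
Proof. by rewrite mnmE. Qed.
Lemma mnm_belastE (m : 'X_{1..n.+1}) j : mnm_belast m j = m (widen_ord (leqnSn n) j).
Proof. by rewrite mnmE. Qed.

Lemma mdeg_mnm_cons t m : mdeg (mnm_cons t m) = (t + mdeg m)%N.
Proof.
rewrite !mdegE big_ord_recl mnm_cons0; congr (_ + _)%N.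
by apply: eq_bigr => j _; rewrite mnm_consS.
Qed.

Lemma mdeg_mnm_behead (m : 'X_{1..n.+1}) : mdeg m = (m ord0 + mdeg (mnm_behead m))%N.
Proof.
rewrite !mdegE big_ord_recl; congr (_ + _)%N.
by apply: eq_bigr => j _; rewrite mnm_beheadE.
Qed.

Lemma mnm_cons_inj t1 t2 m1 m2 : mnm_cons t1 m1 = mnm_cons t2 m2 -> m1 = m2.
Proof.
by move=> e; apply/mnmP => j; rewrite -(mnm_consS t1 m1 j) -(mnm_consS t2 m2 j) e.
Qed.

Lemma mnm_behead_inj_mdeg (m1 m2 : 'X_{1..n.+1}) :
  mdeg m1 = mdeg m2 -> mnm_behead m1 = mnm_behead m2 -> m1 = m2.
Proof.
rewrite (mdeg_mnm_behead m1) (mdeg_mnm_behead m2) => ed eb.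
rewrite eb in ed; move/addIn: ed => e0.
apply/mnmP => i; case: (unliftP ord0 i) => [j ->|->] //.
by rewrite -!mnm_beheadE eb.
Qed.

Lemma mnm_belast_inj (m1 m2 : 'X_{1..n.+1}) : m1 ord_max = 0%N -> m2 ord_max = 0%N ->
  mnm_belast m1 = mnm_belast m2 -> m1 = m2.
Proof.
move=> m10 m20 e; apply/mnmP => i.
case: (unliftP ord_max i) => [j ->|->]; last by rewrite m10 m20.
have -> : lift ord_max j = widen_ord (leqnSn n) j.
  by apply/val_inj; rewrite /= /bump leqNgt ltn_ord.
by rewrite -!mnm_belastE e.
Qed.

Variable R : comNzRingType.

Lemma mevalX_mnm_cons t m (y : 'I_n.+1 -> R) :
  ('X_[mnm_cons t m]).@[y] = y ord0 ^+ t * ('X_[m]).@[fun j => y (lift ord0 j)].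
Proof.
rewrite !mevalX big_ord_recl mnm_cons0; congr (_ * _).
by apply: eq_bigr => j _; rewrite mnm_consS.
Qed.

Lemma mevalX_mnm_behead (m : 'X_{1..n.+1}) (y : 'I_n.+1 -> R) : y ord0 = 1 ->
  ('X_[mnm_behead m]).@[fun j => y (lift ord0 j)] = ('X_[m]).@[y].
Proof.
move=> y0; rewrite !mevalX [RHS]big_ord_recl y0 expr1n mul1r.
by apply: eq_bigr => j _; rewrite mnm_beheadE.
Qed.

Lemma mevalX_mnm_belast (m : 'X_{1..n.+1}) (y : 'I_n.+1 -> R) : m ord_max = 0%N ->
  ('X_[mnm_belast m]).@[fun j => y (widen_ord (leqnSn n) j)] = ('X_[m]).@[y].
Proof.
move=> m0; rewrite !mevalX [RHS]big_ord_recr /= m0 expr0 mulr1.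
by apply: eq_bigr => j _; rewrite mnm_belastE.
Qed.

End MonomialMaps.

Section Binomial.
Local Open Scope nat_scope.

Lemma mul_bin_diag_addn N k : k.+1 * 'C(N + k.+1, k.+1) = (N + k.+1) * 'C(N + k, k).
Proof. by rewrite -mul_bin_diag addnS. Qed.

Lemma bin_mull_le c N j : 0 < c -> 'C(c * N + j, j) <= c ^ j * 'C(N + j, j).
Proof.
move=> c0; elim: j => [|j IH]; first by rewrite !bin0 expn0.
have h1 := mul_bin_diag_addn (c * N) j; have h2 := mul_bin_diag_addn N j.
rewrite -(leq_pmul2l (ltn0Sn j)) h1 expnS.
move: IH; set A := 'C(_, _); set B := 'C(_, _); set P := c ^ j => IH.
set Y := 'C(_, _) in h2 *.
have -> : j.+1 * (c * P * Y) = c * P * (j.+1 * Y) by rewrite mulnCA.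
rewrite h2; have le_cN : c * N + j.+1 <= c * (N + j.+1) by nia.
apply: (leq_trans (leq_mul le_cN IH)).
by rewrite -!mulnA (mulnCA (N + j.+1)) (mulnCA _ P) mulnC -!mulnA.
Qed.

Lemma bin_subn_le N k e : e <= N ->
  'C(N + k.+1, k.+1) <= 'C(N - e + k.+1, k.+1) + e * 'C(N + k, k).
Proof.
elim: e => [|e IH] eN; first by rewrite subn0 mul0n addn0.
apply: (leq_trans (IH (ltnW eN))); rewrite mulSn addnA leq_add2r.
have -> : N - e = (N - e.+1).+1 by lia.
by rewrite addSn binS leq_add2l; apply: leq_bin2l; lia.
Qed.

(* The dimension count behind [exists_homog_comp_multiple]: with [D] this
   large, forms of degree [D] in [M + 1] variables together with multiples of
   a form of degree [e] outnumber the forms of degree [c * D] in [j + 2]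
   variables. *)
Lemma bin_count_lt j M c e D : 0 < c -> j < M -> D = j.+1 * e * c ^ j + e ->
  'C(c * D + j.+1, j.+1) < 'C(D + M, M) + 'C(c * D - e + j.+1, j.+1).
Proof.
move=> c0 jM hD; have eD : e <= c * D by rewrite hD; nia.
apply: (leq_ltn_trans (bin_subn_le j eD)); rewrite addnC ltn_add2r.
apply: (leq_ltn_trans (leq_mul (leqnn e) (bin_mull_le D j c0))).
have binM : 'C(D + j.+1, j.+1) <= 'C(D + M, M).
  rewrite -(bin_sub (leq_addl _ _)) -[in X in _ <= X](bin_sub (leq_addl D M)).
  by rewrite !addnK; apply: leq_bin2l; lia.
apply: leq_trans binM; rewrite -(ltn_pmul2l (ltn0Sn j)) mul_bin_diag_addn.
have bin_gt0 : 0 < 'C(D + j, j) by rewrite bin_gt0 leq_addl.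
by rewrite !mulnA ltn_pmul2r // hD; nia.
Qed.

End Binomial.

Lemma comp_mpoly_homog (R : comNzRingType) n k (P : {mpoly R[n]})
    (lq : n.-tuple {mpoly R[k]}) D c :
  P \is D.-homog -> (forall i, tnth lq i \is c.-homog) -> P \mPo lq \is (c * D)%N.-homog.
Proof.
move=> /dhomogP homP homq; rewrite comp_mpolyE big_seq.
apply/rpred_sum => m pm; apply/rpredZ.
have homX (r : seq 'I_n) :
    \prod_(i <- r) tnth lq i ^+ m i \is (c * \sum_(i <- r) m i)%N.-homog.
  elim: r => [|i r IH]; first by rewrite !big_nil muln0; exact: dhomog1.
  by rewrite !big_cons mulnDr; apply/dhomogM => //; exact: dhomogMn (homq i).
by move: (homX (index_enum _)); rewrite -mdegE (homP m pm).
Qed.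

Section RelationMap.
Variables (F : fieldType) (k M D1 D2 D : nat) (q : {mpoly F[k.+1]})
  (GH : (M.+1).-tuple {mpoly F[k.+1]}).

Definition relation_map (x : (dhomog M.+1 F D1 * dhomog k.+1 F D2)%type) :
    dhomog k.+1 F D :=
  DHomog (pihomogP mdeg D (((x.1 : {mpoly F[M.+1]}) \mPo GH)
                           - q * (x.2 : {mpoly F[k.+1]}))).

Lemma relation_map_is_linear : linear relation_map.
Proof.
move=> a x y; apply/val_inj => /=.
set X1 := mpoly_of_dhomog x.1; set X2 := mpoly_of_dhomog x.2.
set Y1 := mpoly_of_dhomog y.1; set Y2 := mpoly_of_dhomog y.2.
have -> : (a *: X1 + Y1) \mPo GH - q * (a *: X2 + Y2) =
    a *: (X1 \mPo GH - q * X2) + (Y1 \mPo GH - q * Y2).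
  by rewrite linearP /= mulrDr scalerBr -scalerAr opprD addrACA.
by rewrite linearP.
Qed.

HB.instance Definition _ :=
  GRing.isLinear.Build F _ _ _ relation_map relation_map_is_linear.

End RelationMap.

(* Forms of degree [D] in [M + 1] variables, composed with forms of degree [c],
   cannot all stay independent modulo the ideal of a form [q] in fewer
   variables: [relation_map] has a nontrivial kernel by [bin_count_lt]. *)
Lemma exists_homog_comp_multiple (F : fieldType) j M (q : {mpoly F[j.+2]}) e c
    (GH : (M.+1).-tuple {mpoly F[j.+2]}) :
  q != 0 -> q \is e.-homog -> (forall i, tnth GH i \is c.-homog) -> (0 < c)%N ->
  (j < M)%N ->
  exists D (P : {mpoly F[M.+1]}) (R : {mpoly F[j.+2]}),
    [/\ P != 0, P \is D.-homog & P \mPo GH = q * R].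
Proof.
move=> q0 homq homGH c0 jM.
set D := (j.+1 * e * c ^ j + e)%N.
have count := @bin_count_lt j M c e D c0 jM erefl.
have eD : (e <= c * D)%N by rewrite /D; nia.
pose f := linfun (@relation_map F j.+1 M D (c * D - e)%N (c * D)%N q GH
                  : {linear _ -> _}).
have rank_nullity := limg_ker_dim f fullv; rewrite capfv in rank_nullity.
have dim_img : (\dim (f @: fullv) <= 'C(c * D + j.+1, j.+1))%N.
  apply: (leq_trans (dimvS (subvf _))); rewrite dimvf /=.
  have -> : dim (dhomog j.+2 F (c * D)) = 'C(c * D + j.+1, c * D) := erefl.
  by rewrite -(bin_sub (leq_addl _ _)) addnK.
have dim_dom : \dim (fullv : {vspace (dhomog M.+1 F D * dhomog j.+2 F (c * D - e))%type})
    = ('C(D + M, M) + 'C(c * D - e + j.+1, j.+1))%N.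
  rewrite dimvf.
  have -> : dim (dhomog M.+1 F D * dhomog j.+2 F (c * D - e))%type =
      ('C(D + M, D) + 'C(c * D - e + j.+1, c * D - e))%N := erefl.
  by rewrite -(bin_sub (leq_addl D M)) -(bin_sub (leq_addl _ j.+1)) !addnK.
have ker_nz : lker f != 0%VS.
  rewrite -dimv_eq0 -lt0n; move: rank_nullity; rewrite dim_dom => rank_nullity.
  by move: count dim_img; rewrite -rank_nullity; lia.
set x := vpick (lker f).
have x0 : x != 0 by rewrite vpick0.
have : f x == 0 by rewrite -memv_ker memv_pick.
rewrite lfunE /= => /eqP /(congr1 val) /= fx0.
have homx : mpoly_of_dhomog x.1 \mPo GH - q * mpoly_of_dhomog x.2
    \is (c * D)%N.-homog.
  apply: rpredB; first exact: comp_mpoly_homog (dhomog_is_dhomog x.1) homGH.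
  by have := dhomogM homq (dhomog_is_dhomog x.2); rewrite subnKC.
move: fx0; rewrite pihomog_dE // => /eqP; rewrite subr_eq0 => /eqP fx0.
exists D, (mpoly_of_dhomog x.1), (mpoly_of_dhomog x.2); split => //; last first.
  exact: dhomog_is_dhomog.
apply/eqP => x10; move: fx0; rewrite x10 raddf0 => /esym/eqP.
rewrite mulf_eq0 (negbTE q0) /= => /eqP x20.
clear homx; move: x0; case: x x10 x20 => [y1 y2] /= y10 y20.
have -> : y1 = 0 by apply/val_inj.
have -> : y2 = 0 by apply/val_inj.
by rewrite eqxx.
Qed.

Section SubfieldOfPred.
Variables (L : fieldType) (K : divringClosed L).

Inductive subfield_of := SubfieldOf x of x \in K.
Definition subfield_val u := let: SubfieldOf x _ := u in x.
HB.instance Definition _ := [isSub for subfield_val].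
HB.instance Definition _ := [Choice of subfield_of by <:].
HB.instance Definition _ := [SubChoice_isSubComUnitRing of subfield_of by <:].
HB.instance Definition _ :=
  [SubComUnitRing_isSubIntegralDomain of subfield_of by <:].
HB.instance Definition _ := [SubIntegralDomain_isSubField of subfield_of by <:].

Definition subfield_val_rmorphism : {rmorphism subfield_of -> L} := val.

Local Notation map_val := (map_mpoly subfield_val_rmorphism).

Lemma map_val_over n (p : {mpoly subfield_of[n]}) : map_val p \is a mpolyOver n K.
Proof. by apply/mpolyOverP => m; rewrite mcoeff_map_mpoly; exact: valP. Qed.

Lemma map_val_eq0 n (p : {mpoly subfield_of[n]}) : (map_val p == 0) = (p == 0).
Proof.
apply/eqP/eqP => [p0|->]; last by rewrite raddf0.
apply/mpolyP => m; apply/val_inj; move/mpolyP: p0 => /(_ m).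
by rewrite mcoeff_map_mpoly mcoeff0 => ->; rewrite raddf0.
Qed.

Lemma map_val_homog n (p : {mpoly subfield_of[n]}) D :
  (map_val p \is D.-homog) = (p \is D.-homog).
Proof.
have msupp_map m : (m \in msupp (map_val p)) = (m \in msupp p).
  by rewrite !mcoeff_msupp mcoeff_map_mpoly (raddf_eq0 _ val_inj).
by apply/dhomogP/dhomogP => homp m; rewrite ?msupp_map => pm; apply: homp;
  rewrite ?msupp_map.
Qed.

Lemma map_val_surj n (p : {mpoly L[n]}) :
  p \is a mpolyOver n K -> exists p' : {mpoly subfield_of[n]}, map_val p' = p.
Proof.
move=> /mpolyOverP pK.
exists (\sum_(m <- msupp p) insubd (0 : subfield_of) p@_m *: 'X_[m]).
rewrite raddf_sum /= [RHS]mpolyE; apply: eq_bigr => m _.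
rewrite (map_mpolyZ subfield_val_rmorphism) map_mpolyX.
by congr (_ *: _); exact: (insubdK (0 : subfield_of) (pK m)).
Qed.

Lemma exists_homog_comp_multiple_over j M
    (q : {mpoly L[j.+2]}) e c (GH : (M.+1).-tuple {mpoly L[j.+2]}) :
  q \is a mpolyOver _ K -> (forall i, tnth GH i \is a mpolyOver _ K) ->
  q != 0 -> q \is e.-homog -> (forall i, tnth GH i \is c.-homog) -> (0 < c)%N ->
  (j < M)%N ->
  exists D (P : {mpoly L[M.+1]}) (R : {mpoly L[j.+2]}),
    [/\ P \is a mpolyOver _ K, P != 0, P \is D.-homog & P \mPo GH = q * R].
Proof.
move=> qK GHK q0 homq homGH c0 jM.
have [q' q'E] := map_val_surj qK.
have liftGH i : exists g : {mpoly subfield_of[j.+2]}, map_val g == tnth GH i.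
  by have [g gE] := map_val_surj (GHK i); exists g; apply/eqP.
pose GH' := [tuple xchoose (liftGH i) | i < M.+1].
have GH'E i : map_val (tnth GH' i) = tnth GH i.
  by rewrite tnth_mktuple; apply/eqP; exact: (xchooseP (liftGH i)).
have q'0 : q' != 0 by move: q0; rewrite -q'E map_val_eq0.
have homq' : q' \is e.-homog by move: homq; rewrite -q'E map_val_homog.
have homGH' i : tnth GH' i \is c.-homog.
  by move: (homGH i); rewrite -GH'E map_val_homog.
have [D [P' [R' [P'0 homP' P'E]]]] :=
  exists_homog_comp_multiple q'0 homq' homGH' c0 jM.
exists D, (map_val P'), (map_val R'); split.
- exact: map_val_over.
- by rewrite map_val_eq0.
- by rewrite map_val_homog.
have := congr1 map_val P'E.
rewrite map_mpoly_comp; last exact: val_inj.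
rewrite rmorphM /= q'E => <-.
by congr (_ \mPo _); apply: eq_from_tnth => i; rewrite tnth_map GH'E.
Qed.

End SubfieldOfPred.

Lemma mderiv_over (R : comNzRingType) n (S : addrClosed R) (p : {mpoly R[n]}) i :
  p \is a mpolyOver n S -> p^`M(i) \is a mpolyOver n S.
Proof. by move=> /mpolyOverP pS; apply/mpolyOverP => m; rewrite mcoeff_deriv rpredMn. Qed.

Lemma msize_mderiv_lt (R : comNzRingType) n (p : {mpoly R[n]}) i :
  p^`M(i) != 0 -> (msize p^`M(i) < msize p)%N.
Proof.
move=> p'0; have p0 : p != 0 by apply: contraNneq p'0 => ->; rewrite mderiv0.
have p_gt0 : (0 < msize p)%N.
  by rewrite lt0n; move: p0; rewrite -(@mmeasure_poly_eq0 _ _ mdeg).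
rewrite [X in (X < _)%N]msizeE big_seq.
elim/big_ind: _ => //; first by move=> x y; rewrite gtn_max => -> ->.
move=> m; rewrite mcoeff_msupp mcoeff_deriv.
have [pm _|] := boolP ((m + U_(i))%MM \in msupp p); last first.
  by rewrite mcoeff_msupp negbK => /eqP ->; rewrite mul0rn eqxx.
have := msize_mdeg_lt pm; rewrite mdegD.
suff -> : mdeg U_(i)%MM = 1%N by rewrite addn1.
rewrite mdegE (bigD1 i) //= mnm1E eqxx big1 ?addn0 // => j.
by rewrite mnm1E eq_sym => /negbTE ->.
Qed.

Lemma mderiv_eq0_msupp (F : fieldType) n (q : {mpoly F[n]}) i : [pchar F] =i pred0 ->
  q^`M(i) = 0 -> forall m, m \in msupp q -> m i = 0%N.
Proof.
move=> char0 q'0 m qm; apply/eqP; rewrite -leqn0 leqNgt; apply/negP => mi_gt0.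
pose m' := (m - U_(i))%MM.
have m'E : (m' + U_(i))%MM = m.
  by apply/mnmP => k; rewrite mnmDE mnmBE mnm1E; case: eqP => [<-|_] /=; lia.
have := mcoeff_deriv i m' q; rewrite q'0 mcoeff0 m'E => /esym /eqP.
rewrite -mulr_natr mulf_eq0 => /orP [|].
  by move: qm; rewrite mcoeff_msupp => /negbTE ->.
by move/pcharf0P: char0 => ->.
Qed.

Definition hcoord (R : ringType) n (x : 'I_n -> R) : 'I_n.+1 -> R :=
  fun i => if unlift ord0 i is Some j then x j else 1.

Section Homogenization.
Variables (R : comNzRingType) (n : nat).
Implicit Types (p : {mpoly R[n]}) (P : {mpoly R[n.+1]}) (x : 'I_n -> R).

Definition homogenize e p : {mpoly R[n.+1]} :=
  remap (fun m => mnm_cons (e - mdeg m) m) p.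
Definition dehomogenize P : {mpoly R[n]} := remap (@mnm_behead n) P.

Lemma homogenize_homog e p : (msize p <= e.+1)%N -> homogenize e p \is e.-homog.
Proof.
move=> sz_p; apply: remap_homog => m pm; rewrite mdeg_mnm_cons subnK //.
by rewrite -ltnS; apply: leq_trans sz_p; apply: msize_mdeg_lt.
Qed.

Lemma homogenize_eq0 e p : (homogenize e p == 0) = (p == 0).
Proof. by apply: remap_eq0 => m1 m2 _ _ /mnm_cons_inj. Qed.

Lemma homogenize_over (S : addrClosed R) e p :
  p \is a mpolyOver n S -> homogenize e p \is a mpolyOver n.+1 S.
Proof. exact: remap_over. Qed.

Lemma meval_homogenize e p x : (homogenize e p).@[hcoord x] = p.@[x].
Proof.
apply: meval_remap => m _; rewrite mevalX_mnm_cons /hcoord unlift_none expr1n mul1r.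
by apply: meval_eq => j; rewrite liftK.
Qed.

Lemma dehomogenize_eq0 P D : P \is D.-homog -> (dehomogenize P == 0) = (P == 0).
Proof.
move=> /dhomogP homP; apply: remap_eq0 => m1 m2 Pm1 Pm2.
by apply: mnm_behead_inj_mdeg; rewrite (homP _ Pm1) (homP _ Pm2).
Qed.

Lemma meval_dehomogenize P x : (dehomogenize P).@[x] = P.@[hcoord x].
Proof.
apply: meval_remap => m _; rewrite -mevalX_mnm_behead /hcoord ?unlift_none //.
by apply: meval_eq => j; rewrite liftK.
Qed.

End Homogenization.

Lemma meval_homog_scale (R : comNzRingType) n (P : {mpoly R[n]}) D (g : R) (y : 'I_n -> R) :
  P \is D.-homog -> P.@[fun i => g * y i] = g ^+ D * P.@[y].
Proof.
move=> /dhomogP homP; rewrite !mevalE mulr_sumr big_seq [RHS]big_seq.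
apply: eq_bigr => m pm; rewrite mulrCA; congr (_ * _).
have scaleX (r : seq 'I_n) : \prod_(i <- r) (g * y i) ^+ m i =
    g ^+ (\sum_(i <- r) m i) * \prod_(i <- r) y i ^+ m i.
  elim: r => [|i r IH]; first by rewrite !big_nil expr0 mulr1.
  by rewrite !big_cons exprMn IH exprD; ring.
by rewrite scaleX -mdegE (homP m pm).
Qed.

Definition asbool (P : Prop) : bool :=
  if excluded_middle_informative P then true else false.

Lemma asboolP (P : Prop) : reflect P (asbool P).
Proof. by rewrite /asbool; case: excluded_middle_informative => h; constructor. Qed.

Definition divring_pred (L : fieldType) (K : pred L) of GRing.divring_closed K :
  {pred L} := K.

Section DivringPred.
Variables (L : fieldType) (K : pred L) (KdivC : GRing.divring_closed K).
HB.instance Definition _ := GRing.isDivringClosed.Build L (divring_pred KdivC) KdivC.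
End DivringPred.

Lemma leq_nth_sum (T : Type) (x0 : T) (F : T -> nat) (s : seq T) i :
  F x0 = 0%N -> (F (nth x0 s i) <= \sum_(x <- s) F x)%N.
Proof.
move=> F0; elim: s i => [|x s IH] [|i] /=; rewrite ?big_nil ?big_cons ?F0 ?leq_addr //.
exact: leq_trans (IH i) (leq_addl _ _).
Qed.

Lemma meval_nvar0_eq0 (R : comNzRingType) (q : {mpoly R[0]}) (x : 'I_0 -> R) :
  (q.@[x] == 0) = (q == 0).
Proof. by rewrite [in LHS](nvar0_mpolyC q) mevalC {2}(nvar0_mpolyC q) mpolyC_eq0. Qed.

Section DiffSubfield.
Variables (L : fieldType) (d : L -> L) (K : pred L).
Hypothesis hd : derivation d.
Hypothesis hK : diff_subfield d K.

Lemma diff_subfield_divring_closed : GRing.divring_closed K.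
Proof.
by case: hK => K1 KB KM KV _; split => // x y xK yK; apply: KM => //; exact: KV.
Qed.

Local Notation Kc := (divring_pred diff_subfield_divring_closed).

Lemma coeffs_inP n (p : {mpoly L[n]}) : coeffs_in K p <-> p \is a mpolyOver n Kc.
Proof. by split => [pK|/mpolyOverP pK m //]; apply/mpolyOverP. Qed.

Lemma map_mcoeff_over n (p : {mpoly L[n]}) :
  p \is a mpolyOver n Kc -> map_mcoeff d p \is a mpolyOver n Kc.
Proof.
move=> /mpolyOverP pK; apply/mpolyOverP => m.
by rewrite mcoeff_map_mcoeff ?(derivation0 hd) //; case: hK => _ _ _ _; apply.
Qed.

Section GeneratedField.
Variables (a : L) (n : nat).
Local Notation v := (fun i : 'I_n.+1 => iter i d a).

Definition in_Kv (x : L) : Prop := exists f g : {mpoly L[n.+1]},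
  [/\ f \is a mpolyOver _ Kc, g \is a mpolyOver _ Kc, g.@[v] != 0 & x = f.@[v] / g.@[v]].

Lemma in_Kv_meval f : f \is a mpolyOver _ Kc -> in_Kv f.@[v].
Proof. by move=> fK; exists f, 1; split; rewrite ?rpred1 ?meval1 ?oner_neq0 ?divr1. Qed.

Lemma in_Kv0 : in_Kv 0. Proof. by have := in_Kv_meval (rpred0 _); rewrite meval0. Qed.
Lemma in_Kv1 : in_Kv 1. Proof. by have := in_Kv_meval (rpred1 _); rewrite meval1. Qed.

Lemma in_KvB x y : in_Kv x -> in_Kv y -> in_Kv (x - y).
Proof.
move=> [f1 [g1 [f1K g1K g10 ->]]] [f2 [g2 [f2K g2K g20 ->]]].
exists (f1 * g2 - f2 * g1), (g1 * g2); split; rewrite ?rpredB ?rpredM //.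
  by rewrite mevalM mulf_neq0.
by rewrite mevalB !mevalM; field; apply/andP.
Qed.

Lemma in_KvN x : in_Kv x -> in_Kv (- x).
Proof. by move=> Kvx; have := in_KvB in_Kv0 Kvx; rewrite sub0r. Qed.

Lemma in_KvD x y : in_Kv x -> in_Kv y -> in_Kv (x + y).
Proof. by move=> Kvx Kvy; rewrite -[y]opprK; apply: in_KvB => //; apply: in_KvN. Qed.

Lemma in_KvM x y : in_Kv x -> in_Kv y -> in_Kv (x * y).
Proof.
move=> [f1 [g1 [f1K g1K g10 ->]]] [f2 [g2 [f2K g2K g20 ->]]].
exists (f1 * f2), (g1 * g2); split; rewrite ?rpredM //.
  by rewrite mevalM mulf_neq0.
by rewrite !mevalM; field; apply/andP.
Qed.

Lemma in_KvV x : in_Kv x -> in_Kv x^-1.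
Proof.
move=> [f [g [fK gK g0 ->]]].
have [->|f0] := eqVneq f.@[v] 0; first by rewrite mul0r invr0; exact: in_Kv0.
by exists g, f; split => //; rewrite invfM invrK mulrC.
Qed.

Lemma in_Kv_sum (I : Type) (r : seq I) (P : pred I) (F : I -> L) :
  (forall i, P i -> in_Kv (F i)) -> in_Kv (\sum_(i <- r | P i) F i).
Proof. by move=> KvF; elim/big_ind: _ => //; [exact: in_Kv0 | exact: in_KvD]. Qed.

Lemma in_Kv_K c : c \in K -> in_Kv c.
Proof. by move=> cK; rewrite -[c](mevalC v); apply: in_Kv_meval; rewrite mpolyOverC. Qed.

Lemma in_Kv_iter i : in_Kv (v i).
Proof.
have := in_Kv_meval (mpolyOverX Kc U_(i)%MM); rewrite mevalX (bigD1 i) //=.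
rewrite mnm1E eqxx expr1 big1 ?mulr1 // => j.
by rewrite mnm1E eq_sym => /negbTE ->; rewrite expr0.
Qed.

Lemma common_denominator (s : seq L) : (forall x, x \in s -> in_Kv x) ->
  exists (G : {mpoly L[n.+1]}) (Hs : seq {mpoly L[n.+1]}),
  [/\ G \is a mpolyOver _ Kc, all (fun h => h \is a mpolyOver _ Kc) Hs, G.@[v] != 0,
      size Hs = size s & forall j, (j < size s)%N -> s`_j = (Hs`_j).@[v] / G.@[v]].
Proof.
elim: s => [|x s IH] Kvs.
  by exists 1, [::]; split; rewrite ?rpred1 ?meval1 ?oner_neq0.
have [f [g [fK gK g0 ->]]] := Kvs x (mem_head _ _).
have [|G [Hs [GK HsK G0 size_Hs sE]]] := IH.
  by move=> y ys; apply: Kvs; rewrite in_cons ys orbT.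
exists (g * G), (f * G :: [seq h * g | h <- Hs]); split.
- by rewrite rpredM.
- rewrite /= rpredM //=; apply/allP => _ /mapP [h hHs ->].
  by rewrite rpredM //; apply: (allP HsK).
- by rewrite mevalM mulf_neq0.
- by rewrite /= size_map size_Hs.
case=> [|j] /= js; first by rewrite !mevalM; field; apply/andP.
by rewrite (nth_map 0) ?size_Hs // sE // !mevalM; field; apply/andP.
Qed.

(* Clearing denominators and homogenizing turns the [s_j] into values of forms
   at [(1 : v)]; these forms satisfy a homogeneous relation modulo the
   homogenized [q], and dehomogenizing that relation gives one for [s]. *)
Lemma trdeg_in_Kv_le (q : {mpoly L[n.+1]}) r :
  q \is a mpolyOver _ Kc -> q != 0 -> q.@[v] = 0 -> (n <= r)%N ->
  trdeg_le K (fun x => asbool (in_Kv x)) r.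
Proof.
move=> qK q0 qv nr s sKv s_indep; rewrite leqNgt; apply/negP => rs.
have ns : (n < size s)%N by apply: leq_ltn_trans rs.
have [|G [Hs [GK HsK G0 size_Hs sE]]] := common_denominator (s := s).
  by move=> x xs; apply/asboolP; exact: (allP sKv x xs).
pose c := (\sum_(h <- G :: Hs) msize h)%N.
pose GH := [tuple homogenize c (G :: Hs)`_i | i < (size s).+1].
have c_gt0 : (0 < c)%N.
  rewrite /c big_cons ltn_addr // lt0n; apply: contraNneq G0 => /eqP.
  by rewrite (@mmeasure_poly_eq0 _ _ mdeg) => /eqP ->; rewrite meval0.
have GHK i : tnth GH i \is a mpolyOver _ Kc.
  rewrite tnth_mktuple; apply: homogenize_over.
  case: i => [[|i] si] /= //; have [iHs|] := ltnP i (size Hs).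
    exact: (allP HsK) (mem_nth _ iHs).
  by move=> ?; rewrite nth_default // rpred0.
have homGH i : tnth GH i \is c.-homog.
  by rewrite tnth_mktuple; apply/homogenize_homog/leqW/leq_nth_sum/msize0.
have qh0 : homogenize (msize q) q != 0 by rewrite homogenize_eq0.
have [D [P [R [PK P0 homP PE]]]] := exists_homog_comp_multiple_over
  (homogenize_over (msize q) qK) GHK qh0 (homogenize_homog (leqnSn _))
  homGH c_gt0 ns.
pose y := hcoord (fun j : 'I_(size s) => s`_j).
have GHv i : (tnth GH i).@[hcoord v] = G.@[v] * y i.
  rewrite tnth_mktuple meval_homogenize /y /hcoord.
  case: (unliftP ord0 i) => [j ->|->] /=; last by rewrite mulr1.
  by rewrite add0n sE //; field.
have Py : P.@[y] = 0.
  have := congr1 (meval (hcoord v)) PE.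
  rewrite comp_mpoly_meval mevalM meval_homogenize qv mul0r.
  rewrite (meval_eq _ GHv) (meval_homog_scale _ _ homP).
  by move/eqP; rewrite mulf_eq0 expf_eq0 (negbTE G0) andbF => /eqP.
move/negP: P0; apply; rewrite -(dehomogenize_eq0 homP); apply/eqP.
apply: (s_indep (dehomogenize P)).
  by apply/coeffs_inP; apply: remap_over.
by rewrite meval_dehomogenize.
Qed.

(* Differentiating [q(v) = 0] expresses [a^(n+1)] rationally in terms of [v]. *)
Lemma iter_succ_in_Kv (q : {mpoly L[n.+1]}) :
  q \is a mpolyOver _ Kc -> q.@[v] = 0 -> (q^`M(ord_max)).@[v] != 0 ->
  in_Kv (iter n.+1 d a).
Proof.
move=> qK qv q'v0; have := derivation_meval hd q v.
rewrite qv (derivation0 hd) big_ord_recr /=.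
set A := (map_mcoeff d q).@[v]; set S := \sum_(i < n) _.
set Q := (q^`M(ord_max)).@[v] in q'v0 *.
move=> /esym/eqP; rewrite addrA addr_eq0 => /eqP QE.
have -> : d (iter n d a) = - (A + S) / Q by rewrite QE opprK mulrC mulKf.
apply: in_KvM; last by apply: in_KvV; apply: in_Kv_meval; exact: mderiv_over.
apply: in_KvN; apply: in_KvD; first by apply: in_Kv_meval; exact: map_mcoeff_over.
apply: in_Kv_sum => i _; apply: in_KvM; first by apply: in_Kv_meval; exact: mderiv_over.
exact: (in_Kv_iter (Ordinal (ltn_ord i : (i.+1 < n.+1)%N))).
Qed.

Lemma in_Kv_derivation : in_Kv (iter n.+1 d a) -> forall x, in_Kv x -> in_Kv (d x).
Proof.
move=> Kv_iter_succ.
have Kv_d_iter i : in_Kv (d (v i)).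
  have -> : d (v i) = iter i.+1 d a by [].
  have [lt_in|ni] := ltnP i n.
    exact: (in_Kv_iter (Ordinal (lt_in : (i.+1 < n.+1)%N))).
  suff -> : nat_of_ord i = n by [].
  by apply/eqP; rewrite eqn_leq ni -ltnS ltn_ord.
have Kv_d_meval f : f \is a mpolyOver _ Kc -> in_Kv (d f.@[v]).
  move=> fK; rewrite (derivation_meval hd); apply: in_KvD.
    by apply: in_Kv_meval; exact: map_mcoeff_over.
  by apply: in_Kv_sum => i _; apply: in_KvM => //; apply: in_Kv_meval; exact: mderiv_over.
move=> x [f [g [fK gK g0 ->]]].
rewrite (derivationM hd) (derivationV hd g0).
apply: in_KvD; apply: in_KvM; [exact: Kv_d_meval | exact/in_KvV/in_Kv_meval
  | exact: in_Kv_meval | apply: in_KvM; first exact/in_KvN/Kv_d_meval].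
by apply: in_KvV; rewrite expr2; apply: in_KvM; apply: in_Kv_meval.
Qed.

Lemma diff_subfield_in_Kv : in_Kv (iter n.+1 d a) ->
  diff_subfield d (fun x => asbool (in_Kv x)).
Proof.
move=> Kv_iter_succ.
split=> [|x y /asboolP Kvx /asboolP Kvy|x y /asboolP Kvx /asboolP Kvy
        |x /asboolP Kvx|x /asboolP Kvx]; apply/asboolP.
- exact: in_Kv1.
- exact: in_KvB.
- exact: in_KvM.
- exact: in_KvV.
- exact: in_Kv_derivation.
Qed.

End GeneratedField.

(* Take [n] least such that [a, ..., a^(n)] are algebraically dependent and
   [q] of least size; a vanishing [q^`M(ord_max)] would, in characteristic 0,
   make [q] free of its last variable, against the minimality of [n]. *)
Lemma exists_minimal_iter_relation (a : L) r (p : {mpoly L[r.+1]}) :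
  [pchar L] =i pred0 ->
  p \is a mpolyOver _ Kc -> p != 0 -> p.@[fun i : 'I_r.+1 => iter i d a] = 0 ->
  exists n (q : {mpoly L[n.+1]}),
    [/\ (n <= r)%N, q \is a mpolyOver _ Kc, q != 0,
        q.@[fun i : 'I_n.+1 => iter i d a] = 0 &
        (q^`M(ord_max)).@[fun i : 'I_n.+1 => iter i d a] != 0].
Proof.
move=> char0 pK p0 pa.
pose relation j (q : {mpoly L[j]}) :=
  [/\ q \is a mpolyOver _ Kc, q != 0 & q.@[fun i : 'I_j => iter i d a] = 0].
have [|k /asboolP [q1 q1rel] k_min] :=
  ex_minnP (P := fun j => asbool (exists q, relation j q)).
  by exists r.+1; apply/asboolP; exists p.
case: k q1 q1rel k_min => [|n] q1 [q1K q10 q1a] k_min.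
  by move: q10; rewrite -(meval_nvar0_eq0 _ (fun i : 'I_0 => iter i d a)) q1a eqxx.
have nr : (n <= r)%N by rewrite -ltnS k_min //; apply/asboolP; exists p.
have [|s /asboolP [q [[qK q0 qa] <-]] s_min] :=
  ex_minnP (P := fun s => asbool (exists q, relation n.+1 q /\ msize q = s)).
  by exists (msize q1); apply/asboolP; exists q1; split.
exists n, q; split=> //; apply/eqP => q'a.
have [q'0|q'0] := eqVneq (q^`M(ord_max)) 0.
  have last0 := mderiv_eq0_msupp char0 q'0.
  suff /k_min : asbool (exists q', relation n q') by rewrite ltnn.
  apply/asboolP.
  have belast_inj : {in msupp q &, injective (@mnm_belast n)}.
    by move=> m1 m2 qm1 qm2; apply: mnm_belast_inj; apply: last0.
  exists (remap (@mnm_belast n) q); split.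
  - exact: remap_over.
  - by rewrite remap_eq0.
  rewrite -qa; apply: meval_remap => m qm.
  exact: (mevalX_mnm_belast _ (last0 m qm)).
suff /s_min : asbool (exists q', relation n.+1 q' /\ msize q' = msize q^`M(ord_max)).
  by rewrite leqNgt msize_mderiv_lt.
by apply/asboolP; exists q^`M(ord_max); split => //; split => //; exact: mderiv_over.
Qed.

Lemma r_diff_closed_of_no_ext r : [pchar L] =i pred0 ->
  ~ (exists E : pred L,
        [/\ diff_subfield d E, {subset K <= E},
            (exists x, x \in E /\ x \notin K) & trdeg_le K E r]) ->
  r_diff_closed d K r.
Proof.
move=> char0 noE p /coeffs_inP pK p0 a pa; apply/negPn/negP => aK; apply: noE.
have [n [q [nr qK q0 qa q'a]]] := exists_minimal_iter_relation char0 pK p0 pa.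
exists (fun x => asbool (in_Kv a n x)); split.
- exact/diff_subfield_in_Kv/(iter_succ_in_Kv qK qa q'a).
- by move=> x xK; apply/asboolP; exact: in_Kv_K.
- by exists a; split => //; apply/asboolP; have := in_Kv_iter a (@ord0 n).
exact: trdeg_in_Kv_le qK q0 qa nr.
Qed.

End DiffSubfield.

Lemma no_ext_of_r_diff_closed (L : fieldType) (d : L -> L) (K : pred L) r :
  r_diff_closed d K r ->
  ~ (exists E : pred L,
        [/\ diff_subfield d E, {subset K <= E},
            (exists x, x \in E /\ x \notin K) & trdeg_le K E r]).
Proof.
move=> rdc [E [[_ _ _ _ Ed] KE [x [xE xK]] E_trdeg]].
pose s := [seq iter i d x | i <- iota 0 r.+1].
have sE : all (mem E) s.
  by apply/allP => _ /mapP [i _ ->]; elim: i => [|i IH] //=; apply: Ed.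
have size_s : size s = r.+1 by rewrite size_map size_iota.
have s_dep : ~ alg_indep K s.
  by move=> s_indep; have := E_trdeg s sE s_indep; rewrite size_s ltnn.
have [p [pK ps p0]] : exists p : {mpoly L[size s]},
    [/\ coeffs_in K p, p.@[fun i => s`_i] = 0 & p != 0].
  apply: NNPP => no_rel; apply: s_dep => p pK ps; apply/eqP; apply: contraT => p0.
  by case: no_rel; exists p.
move: p pK ps p0; rewrite size_s => p pK ps p0; apply: (negP xK).
apply: (rdc p pK p0); rewrite -ps; apply: meval_eq => i.
by rewrite /s (nth_map 0%N) ?size_iota ?nth_iota.
Qed.

Theorem mainTheorem16 (L : fieldType) (d : L -> L) (K : pred L) (r : nat) :
  [pchar L] =i pred0 ->
  derivation d ->
  diff_subfield d K ->
  r_diff_closed d K r <->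
  ~ (exists E : pred L,
        [/\ diff_subfield d E, {subset K <= E},
            (exists x, x \in E /\ x \notin K) & trdeg_le K E r]).
Proof.
move=> char0 hd hK; split; first exact: no_ext_of_r_diff_closed.
exact: r_diff_closed_of_no_ext.
Qed.
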